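(* Let $X$ be a super $X$-set parameter, let $G$ and $G'$ be graphs of the same order $n$, and let $\varphi:\mathfrak{X}(G)\to\mathfrak{X}(G')$ be a graph isomorphism. Then $|\varphi(S)|=|S|$ for every $X$-set $S$ of $G$ if and only if there exists a bijection $\psi:V(G)\to V(G')$ such that $\psi(S)=\varphi(S)$ for every $X$-set $S$ of $G$ (where $\psi(S)=\{\psi(s):s\in S\}$). In particular, if $|\varphi(S)|=|S|$ for every $X$-set $S$ of $G$, then the vertices of $G'$ can be relabeled so that $G$ and the relabeled graph have exactly the same $X$-sets.
   Context: All graphs are finite, simple, undirected, with nonempty vertex set. A super $X$-set parameter $X$ assigns to each graph $G$ a family of subsets of $V(G)$, called the $X$-sets of $G$, such that: every graph isomorphism maps $X$-sets to $X$-sets; every graph has at least one $X$-set; and (Superset) if $S$ is an $X$-set of $G$ and $S\subseteq S'\subseteq V(G)$, then $S'$ is an $X$-set of $G$. The $X$-TAR graph $\mathfrak{X}(G)$ has as vertices the $X$-sets of $G$, with $S_1S_2$ an edge iff $|S_1\ominus S_2|=1$. *)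

From mathcomp Require Import all_boot.
Unset Printing Implicit Defensive.

Record sgraph := SGraph {
  vtx : finType;
  adj : rel vtx;
  adj_sym : symmetric adj;
  adj_irr : irreflexive adj;
  vtx_nonempty : 0 < #|vtx| }.

Definition graph_iso {G H : sgraph} (f : vtx G -> vtx H) : Prop :=
  bijective f /\ forall u v, @adj H (f u) (f v) = @adj G u v.

Definition param := forall G : sgraph, pred {set vtx G}.

Definition super_param (X : param) : Prop :=
  [/\ (forall (G H : sgraph) (f : vtx G -> vtx H), graph_iso f ->
         forall S : {set vtx G}, X H (f @: S) = X G S),
      (forall G : sgraph, exists S : {set vtx G}, X G S) &
      (forall (G : sgraph) (S S' : {set vtx G}), X G S -> S \subset S' -> X G S')].

Definition symdiff {T : finType} (A B : {set T}) : {set T} := (A :\: B) :|: (B :\: A).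

(* Vertices of the X-TAR graph of G: the X-sets of G. *)
Definition Xsets (X : param) (G : sgraph) : Type := {S : {set vtx G} | X G S}.

Definition tar_adj (X : param) (G : sgraph) (S1 S2 : Xsets X G) : bool :=
  #|symdiff (val S1) (val S2)| == 1.

Definition tar_iso {X : param} {G G' : sgraph} (phi : Xsets X G -> Xsets X G') : Prop :=
  bijective phi /\ forall S1 S2, @tar_adj X G' (phi S1) (phi S2) = @tar_adj X G S1 S2.

From mathcomp Require Import all_boot zify.

(* A size-preserving isomorphism phi of X-TAR graphs is monotone: adding one
   vertex to an X-set is an edge of the TAR graph, and an edge between sets of
   consecutive sizes is an inclusion.  Hence the co-singletons V - u that are
   X-sets are sent to co-singletons V' - psi u, which defines a bijection psi
   between the vertices u with V - u an X-set and the corresponding vertices of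
   G'; extend it arbitrarily to all vertices.  For an X-set S and u outside S,
   the X-set V - u contains S, so phi S avoids psi u; thus phi S is contained
   in psi S, and the two have the same size. *)

Lemma card_symdiff (T : finType) (A B : {set T}) :
  #|symdiff A B| = #|A :\: B| + #|B :\: A|.
Proof.
rewrite /symdiff cardsU.
suff -> : (A :\: B) :&: (B :\: A) = set0 by rewrite cards0 subn0.
by apply/setP=> x; rewrite !inE; case: (x \in A); case: (x \in B).
Qed.

Lemma symdiff1_subset (T : finType) (A B : {set T}) :
  #|symdiff A B| = 1 -> #|B| = #|A|.+1 -> A \subset B.
Proof.
rewrite card_symdiff => sd1 cardB.
have := cardsID B A; have := cardsID A B; rewrite setIC => cardA cardA'.
by rewrite -setD_eq0 -cards_eq0; apply/eqP; lia.
Qed.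

Lemma symdiff_setU1 (T : finType) (A : {set T}) (x : T) :
  x \notin A -> symdiff A (x |: A) = [set x].
Proof.
move=> xA; apply/setP=> y; rewrite /symdiff !inE.
by case: eqP => [->|_]; [rewrite (negbTE xA) | case: (y \in A)].
Qed.

Lemma setC1_of_card (T : finType) (A : {set T}) :
  #|A|.+1 = #|T| -> exists a, A = [set~ a].
Proof.
move=> cardA; have /cards1P[a Ca] : #|~: A| == 1.
  by have := cardsC A; rewrite -cardA; lia.
by exists a; rewrite -Ca setCK.
Qed.

Lemma subset_setC1 (T : finType) (A : {set T}) (u : T) :
  (A \subset [set~ u]) = (u \notin A).
Proof. by rewrite subsetC sub1set inE. Qed.

Lemma imset_eq_of_notin (T T' : finType) (psi : T -> T') (A : {set T}) (B : {set T'}) :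
  bijective psi -> #|B| = #|A| -> (forall u, u \notin A -> psi u \notin B) ->
  psi @: A = B.
Proof.
case=> psi' psiK psiK' cardB out; apply/esym/eqP.
rewrite eqEcard card_imset ?cardB ?leqnn ?andbT; last exact: can_inj psiK.
apply/subsetP=> a aB; rewrite -(psiK' a) imset_f //.
by apply: contraLR aB => /out; rewrite psiK'.
Qed.

(* Off [D] the extension matches the enumerations of [~: D] and [~: D'] by
   position; [f u] only serves as the default value of [nth]. *)
Lemma extend_bij_on {T T' : finType} {D : {set T}} {D' : {set T'}} {f : T -> T'} :
  #|T| = #|T'| -> {in D &, injective f} -> f @: D = D' ->
  exists g : T -> T', bijective g /\ {in D, g =1 f}.
Proof.
move=> cardT f_inj fD.
have cardC : #|~: D| = #|~: D'|.
  by have := cardsC D; have := cardsC D'; rewrite -fD card_in_imset //; lia.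
pose g u := if u \in D then f u
            else nth (f u) (enum (~: D')) (index u (enum (~: D))).
have idx_lt u : u \notin D -> index u (enum (~: D)) < size (enum (~: D')).
  by move=> uD; rewrite -cardE -cardC cardE index_mem mem_enum inE.
have gD u : (g u \in D') = (u \in D).
  rewrite /g; case: ifP => uD; first by rewrite -fD imset_f.
  by apply/negbTE; rewrite -in_setC -mem_enum mem_nth ?idx_lt ?uD.
exists g; split=> [|u uD]; last by rewrite /g uD.
apply: inj_card_bij; last by rewrite cardT.
move=> u w guw; have sameD : (u \in D) = (w \in D) by rewrite -gD guw gD.
move: guw; rewrite /g sameD; case: ifP => wD; first by apply: f_inj; rewrite ?sameD.
move/(congr1 (index^~ (enum (~: D')))).
rewrite !index_uniq ?enum_uniq ?idx_lt ?sameD ?wD // => /(congr1 (nth u (enum (~: D)))).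
by rewrite !nth_index // mem_enum inE ?sameD wD.
Qed.

Section SizePreservingTarIso.

Variables (X : param) (G G' : sgraph).
Hypothesis X_superset : forall S S' : {set vtx G}, X G S -> S \subset S' -> X G S'.
Hypothesis card_vtx : #|vtx G| = #|vtx G'|.
Variable phi : Xsets X G -> Xsets X G'.
Hypothesis phi_bij : bijective phi.
Hypothesis phi_adj : forall S1 S2, tar_adj X G' (phi S1) (phi S2) = tar_adj X G S1 S2.
Hypothesis phi_card : forall S, #|val (phi S)| = #|val S|.

Lemma phi_subset_setU1 (S T : Xsets X G) (x : vtx G) :
  x \notin val S -> val T = x |: val S -> val (phi S) \subset val (phi T).
Proof.
move=> xS defT; apply: symdiff1_subset.
  by apply/eqP; rewrite [_ == _]phi_adj /tar_adj defT symdiff_setU1 ?cards1.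
by rewrite !phi_card defT cardsU1 xS.
Qed.

Lemma phi_mono (S T : Xsets X G) :
  val S \subset val T -> val (phi S) \subset val (phi T).
Proof.
move: {2}#|val T :\: val S| (erefl #|val T :\: val S|) => k.
elim: k S => [|k IH] S cardTS ST.
  suff -> : S = T by [].
  by apply/val_inj/eqP; rewrite eqEsubset ST -setD_eq0 -cards_eq0 cardTS.
have [x xTS] : exists x, x \in val T :\: val S.
  by apply/set0Pn; rewrite -cards_eq0 cardTS.
move: (xTS); rewrite inE => /andP[xS xT].
have XxS : X G (x |: val S) by apply: X_superset (valP S) _; apply: subsetUr.
have phiS_sub : val (phi S) \subset val (phi (exist _ (x |: val S) XxS)).
  exact: phi_subset_setU1 xS _.
apply: subset_trans phiS_sub _.
apply: IH => /=; last by rewrite subUset sub1set xT ST.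
by move: cardTS; rewrite setUC -setDDl (cardsD1 x) xTS => -[].
Qed.

Lemma phi_setC1 (S : Xsets X G) (u : vtx G) :
  val S = [set~ u] -> exists a, val (phi S) = [set~ a].
Proof.
move=> Su; apply: setC1_of_card.
by rewrite phi_card Su cardsC1 card_vtx prednK // vtx_nonempty.
Qed.

Lemma setC1_of_phi_setC1 (S : Xsets X G) (a : vtx G') :
  val (phi S) = [set~ a] -> exists u, val S = [set~ u].
Proof.
move=> Sa; apply: setC1_of_card.
by rewrite -phi_card Sa cardsC1 card_vtx prednK // vtx_nonempty.
Qed.

Let D := [set u | X G [set~ u]].
Let D' := [set a | X G' [set~ a]].

Lemma setC1_map_exists :
  exists f : vtx G -> vtx G',
    forall (S : Xsets X G) u, val S = [set~ u] -> val (phi S) = [set~ f u].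
Proof.
have [a0 _] : exists a0 : vtx G', true.
  by have /card_gt0P[a _] := vtx_nonempty G'; exists a.
suff /fin_all_exists[f fP] : forall u, exists a : vtx G',
    forall S : Xsets X G, val S = [set~ u] -> val (phi S) = [set~ a].
  by exists f => S u; apply: fP.
move=> u.
case: (boolP (X G [set~ u])) => [Xu|nXu]; last first.
  by exists a0 => S Su; case/negP: nXu; rewrite -Su (valP S).
have [a Sa] := @phi_setC1 (exist _ [set~ u] Xu) u erefl.
exists a => S Su; suff -> : S = exist _ [set~ u] Xu by [].
exact: val_inj.
Qed.

Lemma setC1_map_bij_on (f : vtx G -> vtx G') :
  (forall (S : Xsets X G) u, val S = [set~ u] -> val (phi S) = [set~ f u]) ->
  {in D &, injective f} /\ f @: D = D'.
Proof.
case: phi_bij => phi' phiK phiK' fP; split.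
  move=> u w; rewrite !inE => Xu Xw fuw.
  have := fP (exist _ [set~ u] Xu) u erefl; have := fP (exist _ [set~ w] Xw) w erefl.
  rewrite -fuw => <- /val_inj/(can_inj phiK)/(congr1 val)/setC_inj.
  exact: set1_inj.
apply/setP=> a; apply/imsetP/idP => [[u] | ].
  by rewrite !inE => Xu ->; rewrite -(fP (exist _ [set~ u] Xu) u erefl) (valP (phi _)).
rewrite inE => Xa; set S := phi' (exist _ [set~ a] Xa).
have phiS : val (phi S) = [set~ a] by rewrite phiK'.
have [u Su] := setC1_of_phi_setC1 _ _ phiS.
exists u; first by rewrite inE -Su (valP S).
by apply/set1_inj/setC_inj; rewrite -(fP S u Su) phiS.
Qed.

Lemma phi_imset_bij :
  exists psi : vtx G -> vtx G', bijective psi /\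
    forall S : Xsets X G, psi @: val S = val (phi S).
Proof.
have [f fP] := setC1_map_exists.
have [f_inj fD] := setC1_map_bij_on _ fP.
have [psi [psi_bij psi_f]] := extend_bij_on card_vtx f_inj fD.
exists psi; split=> // S; apply: imset_eq_of_notin => // u uS.
have Xu : X G [set~ u] by apply: X_superset (valP S) _; rewrite subset_setC1.
have phiSu : val (phi S) \subset [set~ psi u].
  rewrite psi_f ?inE // -(fP (exist _ [set~ u] Xu) u erefl).
  by apply: phi_mono; rewrite subset_setC1.
by rewrite -subset_setC1.
Qed.

Lemma Xsets_imset (psi : vtx G -> vtx G') :
  bijective psi -> (forall S : Xsets X G, psi @: val S = val (phi S)) ->
  forall S : {set vtx G}, X G S = X G' (psi @: S).
Proof.
move=> psi_bij psi_phi S; case: phi_bij => phi' _ phiK'.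
apply/idP/idP => [XS | XpsiS].
  by rewrite (psi_phi (exist _ S XS)) (valP (phi _)).
set T := phi' (exist _ (psi @: S) XpsiS).
have : psi @: val T = psi @: S by rewrite psi_phi phiK'.
by move/(imset_inj (bij_inj psi_bij)) <-; apply: valP.
Qed.

End SizePreservingTarIso.

Theorem theorem2p25 (X : param) (HX : super_param X) (n : nat)
  (G G' : sgraph) (HG : #|vtx G| = n) (HG' : #|vtx G'| = n)
  (phi : Xsets X G -> Xsets X G') (Hphi : tar_iso phi) :
  ((forall S : Xsets X G, #|val (phi S)| = #|val S|) <->
   (exists psi : vtx G -> vtx G', bijective psi /\
      forall S : Xsets X G, psi @: val S = val (phi S)))
  /\
  ((forall S : Xsets X G, #|val (phi S)| = #|val S|) ->
   exists psi : vtx G -> vtx G', bijective psi /\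
      forall S : {set vtx G}, X G S = X G' (psi @: S)).
Proof.
case: HX => _ _ X_superset; case: Hphi => phi_bij phi_adj.
have card_vtx : #|vtx G| = #|vtx G'| by rewrite HG HG'.
have phi_imset_iff : (forall S : Xsets X G, #|val (phi S)| = #|val S|) <->
    (exists psi : vtx G -> vtx G', bijective psi /\
      forall S : Xsets X G, psi @: val S = val (phi S)).
  split; first exact: (phi_imset_bij _ _ _ (X_superset G) card_vtx _ phi_bij phi_adj).
  by case=> psi [psi_bij psi_phi] S; rewrite -psi_phi card_imset //; apply: bij_inj.
split=> // /phi_imset_iff[psi [psi_bij psi_phi]].
by exists psi; split; last exact: (Xsets_imset _ _ _ _ phi_bij _ psi_bij psi_phi).
Qed.
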